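(* The following two statements are equivalent. (i) For every amphicheiral knot $K$, with Conway polynomial $C(z)$, there is $F\in\mathbb Z_4[z^2]$ with $F^2=C(z)\,C(z^2)\,C(iz)$ in $\mathbb Z_4[z^2]$. (ii) For every amphicheiral knot $K$ and every $i\ge 1$, $pc_{4i}(K)\equiv 0\pmod 2$.
   Context: A knot is amphicheiral if it is isotopic to its mirror image, disregarding string orientation. The Conway polynomial $C(z)$ of a knot lies in $1+z^2\mathbb Z[z^2]$. Define $\exp_{\mathbb Z}\colon x\mathbb Z[[x]]\to 1+x\mathbb Z[[x]]$ by $\exp_{\mathbb Z}\big(\sum_{i\ge1} b_i x^i\big)=\prod_{i\ge 1}(1+(-x)^i)^{b_i}$; it is a bijection taking addition to multiplication, and $\log_{\mathbb Z}$ denotes its inverse. Regarding $C$ as a power series in the variable $x=z^2$, write $\log_{\mathbb Z}(C)=\sum_{i\ge1} pc_{2i}\, z^{2i}$; the integers $pc_{2i}=pc_{2i}(K)$ are knot invariants. The product $C(z)C(z^2)C(iz)$ lies in $\mathbb Z[z^2]$ and is reduced modulo $4$. *)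

(* Knots are encoded as closed braids (Alexander's theorem);
   knot equivalence is generated by Markov moves (Markov's theorem) plus
   orientation reversal (unoriented knots). The Conway polynomial is
   characterised via the Alexander polynomial computed from the (unreduced)
   Burau matrix (Fox calculus of the closed-braid presentation). *)
From HB Require Import structures.
From mathcomp Require Import all_boot all_order all_algebra.
From Stdlib Require Import Relations.

Set Implicit Arguments.
Unset Strict Implicit.
Unset Printing Implicit Defensive.

Import Order.TTheory GRing.Theory Num.Theory.
Local Open Scope ring_scope.

(* A braid word on n strands: letter k (nonzero int, |k| <= n-1) stands for
   sigma_|k| ^ (sign k). *)
Definition valid_braid (x : nat * seq int) : bool :=
  (0 < x.1)%N && all (fun k : int => (k != 0) && (absz k < x.1)%N) x.2.

Inductive mstep : nat * seq int -> nat * seq int -> Prop :=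
| ms_cancel n (u v : seq int) (k : int) :
    mstep (n, u ++ k :: - k :: v) (n, u ++ v)
| ms_far n (u v : seq int) (i j : int) :
    (absz i + 1 < absz j)%N ->
    mstep (n, u ++ i :: j :: v) (n, u ++ j :: i :: v)
| ms_braid n (u v : seq int) (i : nat) :
    mstep (n, u ++ [:: Posz i; Posz i.+1; Posz i] ++ v)
          (n, u ++ [:: Posz i.+1; Posz i; Posz i.+1] ++ v)
| ms_conj n (w : seq int) (k : int) :
    mstep (n, k :: w) (n, rcons w k)
| ms_stab n (w : seq int) (e : bool) :
    mstep (n, w) (n.+1, rcons w ((-1) ^+ e * (Posz n)))
| ms_rev n (w : seq int) :
    mstep (n, w) (n, rev w).

Definition vstep (x y : nat * seq int) : Prop :=
  valid_braid x /\ valid_braid y /\ mstep x y.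

Definition knot_equiv : relation (nat * seq int) :=
  clos_refl_sym_trans _ vstep.

(* permutation of strands induced by a braid word (0-based positions) *)
Definition transp (i j : nat) : nat :=
  if j == i then i.+1 else if j == i.+1 then i else j.

Definition strand_perm (w : seq int) : nat -> nat :=
  foldr (fun k f => fun j => transp (absz k).-1 (f j)) id w.

Definition is_knot (n : nat) (w : seq int) : Prop :=
  valid_braid (n, w) /\
  forall j, (j < n)%N -> exists m, iter m (strand_perm w) 0%N = j.

Definition mirror (w : seq int) : seq int := map (fun k => - k) w.

Definition amphicheiral (n : nat) (w : seq int) : Prop :=
  knot_equiv (n, w) (n, mirror w).

Definition KF := {fraction {poly rat}}.
Definition sF : KF := tofrac ('X : {poly rat}).   (* s = t^(1/2) *)
Definition tF : KF := sF ^+ 2.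

Definition blk (i : nat) (x00 x01 x10 x11 : KF) (a b : nat) : KF :=
  if (a == i) && (b == i) then x00
  else if (a == i) && (b == i.+1) then x01
  else if (a == i.+1) && (b == i) then x10
  else if (a == i.+1) && (b == i.+1) then x11
  else (a == b)%:R.

(* unreduced Burau matrix of sigma_|k|^(sign k) *)
Definition burau (n : nat) (k : int) : 'M[KF]_n :=
  \matrix_(a, b)
    if 0 < k then blk (absz k).-1 (1 - tF) tF 1 0 a b
    else blk (absz k).-1 0 1 tF^-1 (1 - tF^-1) a b.

Definition burau_word (n : nat) (w : seq int) : 'M[KF]_n :=
  foldr (fun k M => burau n k *m M) 1%:M w.

Lemma succ_ltn n (a : 'I_n.-1) : (a.+1 < n)%N.
Proof. by case: n a => [|n] [a Ha]. Qed.

Definition ordS n (a : 'I_n.-1) : 'I_n := Ordinal (succ_ltn a).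

(* (1,1)-minor of I - Burau(beta): the Alexander polynomial up to units *)
Definition alex_minor (n : nat) (w : seq int) : KF :=
  \det (\matrix_(a < n.-1, b < n.-1)
          ((1%:M - burau_word n w) (ordS a) (ordS b))).

Definition conway (n : nat) (w : seq int) (C : {poly int}) : Prop :=
  C`_0 = 1 /\
  exists (e : bool) (k : int),
    (map_poly (fun z : int => z%:~R : KF) C).[sF - sF^-1]
      = (-1) ^+ e * sF ^ (2 * k) * alex_minor n w.

(* C regarded as a polynomial in x = z^2 *)
Definition even_part (C : {poly int}) : {poly int} :=
  \poly_(j < size C) C`_(2 * j).

(* C(z) C(z^2) C(iz), as a polynomial in x = z^2 *)
Definition conway_triple (C : {poly int}) : {poly int} :=
  let P := even_part C in P * (P \Po 'X ^+ 2) * (P \Po - 'X).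

(* truncations of exp_Z(sum_i b_i x^i) = prod_i (1 + (-x)^i)^(b_i),
   split into the factors with nonnegative / negative exponents *)
Definition expZ_pos (b : nat -> int) (N : nat) : {poly int} :=
  \prod_(1 <= i < N.+1)
     (1 + (- 'X) ^+ i) ^+ (if 0 <= b i then absz (b i) else 0%N).
Definition expZ_neg (b : nat -> int) (N : nat) : {poly int} :=
  \prod_(1 <= i < N.+1)
     (1 + (- 'X) ^+ i) ^+ (if b i < 0 then absz (b i) else 0%N).

(* b = log_Z(c), i.e. exp_Z(sum_{i>=1} b_i x^i) = c in Z[[x]] *)
Definition is_logZ (c : {poly int}) (b : nat -> int) : Prop :=
  forall N j, (j <= N)%N -> (expZ_pos b N)`_j = (c * expZ_neg b N)`_j.

From HB Require Import structures.
From mathcomp Require Import all_boot all_order all_algebra.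
From mathcomp Require Import ring zify.
Import Order.TTheory GRing.Theory Num.Theory.

(* Let p be the reduction modulo 4 of the even part P of C, a polynomial in
   x = z^2 with p(0) = 1.  The two statements are equivalent knot by knot, and
   of the hypotheses on K only C(0) = 1 is used.  Modulo 2, squaring is the
   Frobenius F(x) |-> F(x^2) and F(-x) = F(x), so a square root F of
   p(x) p(x^2) p(-x) in Z_4[x] must be p(x^2) + 2H; then F^2 = p(x^2)^2, and
   (i) says that p(x) p(-x) = p(x^2).
   Write P = prod_i f_i^(b_i) with f_i = 1 + (-x)^i, b = log_Z P (it exists:
   the exponents are solved for degree by degree).  Then
   f_i(x) f_i(-x) = f_i(x^2) for odd i and f_i(x^2) + 2x^i for even i, so in
   Z_4[[x]] the quotient p(x) p(-x) / p(x^2) is the product over even i of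
   1 + 2 b_i x^i + O(x^(i+1)), which is 1 iff every b_(2i) is even.  Power
   series are replaced by congruences modulo x^n, with the factors of negative
   exponent moved to the other side. *)

Set Implicit Arguments.
Unset Strict Implicit.
Unset Printing Implicit Defensive.

Local Open Scope ring_scope.

Section EqModXn.
Variable R : comNzRingType.
Implicit Types (f g h k : {poly R}) (n : nat).

Definition eqmodXn n f g := exists q, f - g = 'X^n * q.

Lemma eqmodXnP n f g : eqmodXn n f g <-> forall j, (j < n)%N -> f`_j = g`_j.
Proof.
split=> [[q e] j jn|H].
  by apply/eqP; rewrite -subr_eq0 -coefB e coefXnM jn.
exists (drop_poly n (f - g)).
rewrite -[LHS](poly_take_drop n) mulrC.
suff -> : take_poly n (f - g) = 0 by rewrite add0r.
apply/polyP=> i; rewrite coef_take_poly coef0 coefB.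
by case: ifP => // /H ->; rewrite subrr.
Qed.

Lemma eqmodXn_refl n f : eqmodXn n f f.
Proof. by exists 0; rewrite subrr mulr0. Qed.

Lemma eqmodXn_sym n f g : eqmodXn n f g -> eqmodXn n g f.
Proof. by case=> q e; exists (- q); rewrite mulrN -e opprB. Qed.

Lemma eqmodXn_trans n f g h : eqmodXn n f g -> eqmodXn n g h -> eqmodXn n f h.
Proof. by case=> q1 e1 [q2 e2]; exists (q1 + q2); rewrite mulrDr -e1 -e2 addrA subrK. Qed.

Lemma eqmodXnB n f1 g1 f2 g2 :
  eqmodXn n f1 g1 -> eqmodXn n f2 g2 -> eqmodXn n (f1 - f2) (g1 - g2).
Proof.
by case=> q1 e1 [q2 e2]; exists (q1 - q2); rewrite mulrBr -e1 -e2; ring.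
Qed.

Lemma eqmodXnM n f1 g1 f2 g2 :
  eqmodXn n f1 g1 -> eqmodXn n f2 g2 -> eqmodXn n (f1 * f2) (g1 * g2).
Proof.
case=> q1 e1 [q2 e2]; exists (q1 * f2 + g1 * q2).
by rewrite mulrDr mulrA -e1 mulrCA -e2; ring.
Qed.

Lemma eqmodXn_comp n f g s :
  eqmodXn n f g -> eqmodXn n (f \Po ('X * s)) (g \Po ('X * s)).
Proof.
case=> q e; exists (s ^+ n * (q \Po ('X * s))).
by rewrite -comp_polyB e comp_polyM rmorphXn /= comp_polyX exprMn mulrA.
Qed.

Lemma eqmodXnS n f g : eqmodXn n f g -> f`_n = g`_n -> eqmodXn n.+1 f g.
Proof.
move=> /eqmodXnP fg fgn; apply/eqmodXnP => j; rewrite ltnS leq_eqVlt.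
by case/orP=> [/eqP -> //|]; apply: fg.
Qed.

Lemma eqmodXn_eq f g : (forall n, eqmodXn n.+1 f g) -> f = g.
Proof. by move=> fg; apply/polyP => j; apply: (eqmodXnP _ _ _).1 (fg j) _ _. Qed.

Lemma eqmodXn_lcancel n k f g :
  k`_0 = 1 -> eqmodXn n (k * f) (k * g) -> eqmodXn n f g.
Proof.
move=> k0 /eqmodXnP kfg; apply/eqmodXnP => j.
elim/ltn_ind: j => j IH jn; apply/eqP; rewrite -subr_eq0 -coefB; apply/eqP.
have := kfg j jn; move/eqP; rewrite -subr_eq0 -coefB -mulrBr coefM big_ord_recl.
rewrite k0 mul1r subn0 big1 ?addr0; first by move/eqP.
move=> i _; rewrite lift0 coefB IH ?subrr ?mulr0 //; have := ltn_ord i; lia.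
Qed.

Lemma coef0_lreg k : k`_0 = 1 -> GRing.lreg k.
Proof.
move=> k0 f g kfg; apply: eqmodXn_eq => n.
by apply: (eqmodXn_lcancel k0); rewrite kfg; apply: eqmodXn_refl.
Qed.

End EqModXn.

Lemma eqmodXn_map (R S : comNzRingType) (phi : {rmorphism R -> S}) n f g :
  eqmodXn n f g -> eqmodXn n (map_poly phi f) (map_poly phi g).
Proof.
by case=> q e; exists (map_poly phi q); rewrite -rmorphB e rmorphM rmorphXn /= map_polyX.
Qed.

Definition pos_part (k : int) : nat := if 0 <= k then `|k|%N else 0%N.
Definition neg_part (k : int) : nat := if k < 0 then `|k|%N else 0%N.

Lemma pos_neg_part k : (pos_part k)%:Z - (neg_part k)%:Z = k.
Proof. rewrite /pos_part /neg_part; case: ifP; case: ifP; lia. Qed.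

Definition zpow_num (R : nzSemiRingType) (u v : R) (k : int) :=
  u ^+ pos_part k * v ^+ neg_part k.

Section CharDividesFour.
Variable R : comNzRingType.
Hypothesis four0 : 4%:R = 0 :> R.

Lemma mul22 : 2 * 2 = 0 :> R.
Proof. by rewrite -natrM. Qed.

Lemma oppr2 : - 2 = 2 :> R.
Proof. by apply/eqP; rewrite -subr_eq0 -opprD -natrD four0 oppr0. Qed.

Lemma mul2_natr k : 2 * k%:R = 2 *+ odd k :> R.
Proof.
rewrite -[k in LHS]odd_double_half natrD -mul2n natrM mulrDr mulrA mul22.
by rewrite mul0r addr0 mulr_natr.
Qed.

Lemma exprD_mul2 (y e : R) k :
  (y + 2 * e) ^+ k = y ^+ k + 2 * k%:R * e * y ^+ k.-1.
Proof.
elim: k => [|k IH]; first by rewrite !expr0; ring.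
rewrite exprS IH; case: k IH => [|k] _.
  by rewrite !expr0 !expr1; ring.
have -> : (y + 2 * e) * (y ^+ k.+1 + 2 * k.+1%:R * e * y ^+ k)
  = y ^+ k.+2 + 2 * k.+2%:R * e * y ^+ k.+1 + 2 * 2 * (k.+1%:R * e ^+ 2 * y ^+ k).
  by rewrite !exprS expr0 -[k.+2]addn1 natrD; ring.
by rewrite mul22 mul0r addr0.
Qed.

Lemma zpow_num_mul2 (y e : R) k :
  zpow_num (y + 2 * e) y k - zpow_num y (y + 2 * e) k
    = 2 *+ odd `|k| * e * y ^+ `|k|.-1.
Proof.
rewrite /zpow_num /pos_part /neg_part; case: ifP => [k_ge0|k_lt0].
  by rewrite ltNge k_ge0 /= !expr0 !mulr1 exprD_mul2 mul2_natr addrC addKr.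
rewrite ltNge k_lt0 /= !expr0 !mul1r exprD_mul2 mul2_natr opprD addrA subrr add0r.
by rewrite -!mulNr -mulNrn oppr2.
Qed.

End CharDividesFour.

Lemma comp_polyXn_inj (R : nzSemiRingType) n :
  (0 < n)%N -> injective (fun p : {poly R} => p \Po 'X^n).
Proof.
move=> n_gt0 p q /polyP pq; apply/polyP => i.
by have := pq (i * n)%N; rewrite !coef_comp_poly_Xn // dvdn_mull // mulnK.
Qed.

Lemma mul2_comp_polyNX (R : comNzRingType) (F : {poly R}) :
  4%:R = 0 :> R -> 2 * (F \Po - 'X) = 2 * F.
Proof.
move=> four0; have four0P : 4%:R = 0 :> {poly R} by rewrite -polyC_natr four0.
elim/poly_ind: F => [|G c IH]; first by rewrite comp_poly0.
by rewrite comp_poly_MXaddC !mulrDr !mulrA IH mulrN -!mulNr (oppr2 four0P).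
Qed.

Lemma Z4_four0 : 4%:R = 0 :> 'Z_4.
Proof. exact: val_inj. Qed.

Lemma polyZ4_four0 : 4%:R = 0 :> {poly 'Z_4}.
Proof. by rewrite -polyC_natr Z4_four0. Qed.

Lemma mul2_sqr_polyZ4 (F : {poly 'Z_4}) : 2 * F ^+ 2 = 2 * (F \Po 'X^2).
Proof.
have mul2_sqr (c : 'Z_4) : 2 * c ^+ 2 = 2 * c.
  by case: c => [[|[|[|[|]]]] ?] //; apply/val_inj.
elim/poly_ind: F => [|G c IH]; first by rewrite comp_poly0 expr0n mulr0.
have -> : 2 * (G * 'X + c%:P) ^+ 2
    = 2 * G ^+ 2 * 'X^2 + 2 * 2 * (c%:P * G * 'X) + 2 * c%:P ^+ 2 by ring.
rewrite IH (mul22 polyZ4_four0) mul0r addr0 comp_poly_MXaddC.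
by rewrite -polyC_natr -rmorphXn -!rmorphM /= mul2_sqr rmorphM; ring.
Qed.

Lemma mul2_eq0_polyZ4 (D : {poly 'Z_4}) : 2 * D = 0 -> exists H, D = 2 * H.
Proof.
move=> /polyP D2; exists (map_poly (fun c : 'Z_4 => (c == 2)%:R) D).
apply/polyP => i; have := D2 i; rewrite -polyC_natr !coefCM coef_map_id0 // coef0.
by case: (D`_i) => [[|[|[|[|]]]] ?] // _; apply/val_inj.
Qed.

Lemma sqr_triple_iff (p : {poly 'Z_4}) : p`_0 = 1 ->
  (exists F, F ^+ 2 = p * (p \Po 'X^2) * (p \Po - 'X))
    <-> p * (p \Po - 'X) = p \Po 'X^2.
Proof.
move=> p0; set tp := p \Po 'X^2.
split=> [[F eF]|fix_p]; last by exists tp; rewrite expr2 mulrAC fix_p.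
have two_fix : 2 * (p * (p \Po - 'X)) = 2 * tp.
  by rewrite mulrCA (mul2_comp_polyNX _ Z4_four0) mulrCA -expr2 mul2_sqr_polyZ4.
have two_sqrF : 2 * F ^+ 2 = 2 * tp ^+ 2.
  by rewrite eF mulrAC mulrA two_fix expr2 mulrA.
have [H eH] : exists H, F - tp = 2 * H.
  apply: mul2_eq0_polyZ4; apply: (@comp_polyXn_inj _ 2) => //=.
  rewrite comp_poly0 comp_polyM comp_polyB -polyC_natr comp_polyC polyC_natr.
  by rewrite mulrBr -!mul2_sqr_polyZ4 two_sqrF subrr.
have sqrF : F ^+ 2 = tp ^+ 2.
  rewrite -(subrK tp F) eH addrC (exprD_mul2 polyZ4_four0) mulrAC.
  by rewrite (mul22 polyZ4_four0) !mul0r addr0.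
have tp0 : tp`_0 = 1 by rewrite coef_comp_poly_Xn.
apply: (coef0_lreg tp0); rewrite -expr2 -sqrF eF; ring.
Qed.

Section ExpZProducts.
Variable R : comNzRingType.
Implicit Types (p A B : {poly R}) (b : nat -> int).

Lemma eqmodXn_graeffe n p A B : eqmodXn n B (p * A) ->
  eqmodXn n ((p * (p \Po - 'X) - (p \Po 'X^2)) * (A * (A \Po - 'X) * (A \Po 'X^2)))
            (B * (B \Po - 'X) * (A \Po 'X^2) - (B \Po 'X^2) * (A * (A \Po - 'X))).
Proof.
move=> BpA; have BpA_sym := eqmodXn_sym BpA.
have NX : eqmodXn n (p * A \Po - 'X) (B \Po - 'X).
  by rewrite -mulrN1; apply: eqmodXn_comp.
have X2 : eqmodXn n (p * A \Po 'X^2) (B \Po 'X^2).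
  by rewrite expr2; apply: eqmodXn_comp.
rewrite !comp_polyM in NX X2.
have -> : (p * (p \Po - 'X) - (p \Po 'X^2)) * (A * (A \Po - 'X) * (A \Po 'X^2))
    = (p * A) * ((p \Po - 'X) * (A \Po - 'X)) * (A \Po 'X^2)
      - ((p \Po 'X^2) * (A \Po 'X^2)) * (A * (A \Po - 'X)) by ring.
apply: eqmodXnB; apply: eqmodXnM => //; try exact: eqmodXnM.
  all: exact: eqmodXn_refl.
Qed.

Definition expZ_factor i : {poly R} := 1 + (- 'X) ^+ i.

Definition expZ_num b N : {poly R} :=
  \prod_(1 <= i < N.+1) expZ_factor i ^+ pos_part (b i).
Definition expZ_den b N : {poly R} :=
  \prod_(1 <= i < N.+1) expZ_factor i ^+ neg_part (b i).

Lemma expZ_factor_graeffe i :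
  expZ_factor i * (expZ_factor i \Po - 'X)
    = (expZ_factor i \Po 'X^2) + ((- 'X) ^+ i + 'X^i).
Proof.
rewrite /expZ_factor !(rmorphD, rmorph1, rmorphXn, rmorphN) /= !comp_polyX opprK.
by rewrite expr2 -mulNr exprMn; ring.
Qed.

Lemma expZ_factor_graeffe_odd i : odd i ->
  expZ_factor i * (expZ_factor i \Po - 'X) = expZ_factor i \Po 'X^2.
Proof.
by move=> odd_i; rewrite expZ_factor_graeffe exprNn -signr_odd odd_i mulN1r addNr addr0.
Qed.

Lemma expZ_factor_graeffe_even i : ~~ odd i ->
  expZ_factor i * (expZ_factor i \Po - 'X) = expZ_factor i \Po 'X^2 + 2 * 'X^i.
Proof.
move=> even_i; rewrite expZ_factor_graeffe exprNn -signr_odd (negbTE even_i) mul1r.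
by rewrite mulr_natl mulr2n.
Qed.

Lemma expZ_factor_horner0 i : (0 < i)%N -> (expZ_factor i).[0] = 1.
Proof.
move=> i_gt0; rewrite /expZ_factor hornerD hornerC horner_exp hornerN hornerX.
by rewrite oppr0 expr0n gtn_eqF // addr0.
Qed.

Lemma expZ_graeffe_num b N :
  expZ_num b N * (expZ_num b N \Po - 'X) * (expZ_den b N \Po 'X^2)
    = \prod_(1 <= i < N.+1) zpow_num (expZ_factor i * (expZ_factor i \Po - 'X))
                                     (expZ_factor i \Po 'X^2) (b i).
Proof.
rewrite /expZ_num /expZ_den !rmorph_prod -!big_split /=; apply: eq_bigr => i _.
by rewrite /zpow_num !rmorphXn /= exprMn.
Qed.

Lemma expZ_graeffe_den b N :
  (expZ_num b N \Po 'X^2) * (expZ_den b N * (expZ_den b N \Po - 'X))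
    = \prod_(1 <= i < N.+1) zpow_num (expZ_factor i \Po 'X^2)
                                     (expZ_factor i * (expZ_factor i \Po - 'X)) (b i).
Proof.
rewrite /expZ_num /expZ_den !rmorph_prod -!big_split /=; apply: eq_bigr => i _.
by rewrite /zpow_num !rmorphXn /= exprMn.
Qed.

Lemma horner0_comp (f q : {poly R}) : q.[0] = 0 -> (f \Po q).[0] = f.[0].
Proof. by move=> q0; rewrite horner_comp q0. Qed.

Lemma hornerNX0 : (- 'X : {poly R}).[0] = 0.
Proof. by rewrite hornerN hornerX oppr0. Qed.

Lemma hornerX20 : ('X^2 : {poly R}).[0] = 0.
Proof. by rewrite hornerXn expr0n. Qed.

Lemma expZ_den_horner0 b N : (expZ_den b N).[0] = 1.
Proof.
rewrite horner_prod big_nat_cond big1 // => i /andP[/andP[i_gt0 _] _].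
by rewrite horner_exp expZ_factor_horner0 // expr1n.
Qed.

End ExpZProducts.

Arguments expZ_factor {R} i.
Arguments expZ_num {R} b N.
Arguments expZ_den {R} b N.

Lemma horner_zpow_num (R : comNzRingType) (u v : {poly R}) k x :
  (zpow_num u v k).[x] = zpow_num u.[x] v.[x] k.
Proof. by rewrite hornerM !horner_exp. Qed.

Section GraeffeZ4.
Local Notation f i := (expZ_factor i : {poly 'Z_4}).
Local Notation u i := (f i * (f i \Po - 'X)).
Local Notation v i := (f i \Po 'X^2).

Lemma zpow_num_graeffe_even i k : ~~ odd i ->
  zpow_num (u i) (v i) k - zpow_num (v i) (u i) k
    = 2 *+ odd `|k| * 'X^i * v i ^+ `|k|.-1.
Proof.
by move=> even_i; rewrite expZ_factor_graeffe_even // (zpow_num_mul2 polyZ4_four0).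
Qed.

Lemma prod_zpow_num_graeffe (b : nat -> int) m n :
  (forall i, (m <= i < n)%N -> ~~ odd i -> (2 %| b i)%Z) ->
  \prod_(m <= i < n) zpow_num (u i) (v i) (b i)
    = \prod_(m <= i < n) zpow_num (v i) (u i) (b i).
Proof.
move=> b_even; apply: eq_big_nat => i i_mn.
have [odd_i|even_i] := boolP (odd i); first by rewrite expZ_factor_graeffe_odd.
apply/eqP; rewrite -subr_eq0 zpow_num_graeffe_even //.
by have := b_even i i_mn even_i; rewrite dvdzE dvdn2 => /negbTE ->; rewrite mulr0n !mul0r.
Qed.

Lemma zpow_num_graeffe_horner0 i (k : int) : (0 < i)%N ->
  (zpow_num (v i) (u i) k).[0] = 1 /\ (v i).[0] = 1.
Proof.
move=> i_gt0; rewrite horner_zpow_num hornerM !horner0_comp ?hornerNX0 ?hornerX20 //.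
by rewrite expZ_factor_horner0 // mulr1 /zpow_num !expr1n mulr1.
Qed.

Lemma graeffe_fixed_iff_expZ_even (p : {poly 'Z_4}) (b : nat -> int) :
  (forall N, eqmodXn N.+1 (expZ_num b N) (p * expZ_den b N)) ->
  p * (p \Po - 'X) = p \Po 'X^2
    <-> forall m, (0 < m)%N -> ~~ odd m -> (2 %| b m)%Z.
Proof.
move=> p_expZ.
pose K N : {poly 'Z_4} :=
  expZ_den b N * (expZ_den b N \Po - 'X) * (expZ_den b N \Po 'X^2).
have K0 N : (K N)`_0 = 1.
  rewrite -horner_coef0 !hornerM !horner0_comp ?hornerNX0 ?hornerX20 //.
  by rewrite expZ_den_horner0 !mulr1.
have defect N := eqmodXn_graeffe (p_expZ N).
split=> [fix_p | b_even].
  (* At the least even m with b m odd, the two products first differ by 2 X^m. *)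
  elim/ltn_ind => m IH m_gt0 even_m; apply/negPn/negP => odd_bm.
  have := defect m; rewrite fix_p subrr mul0r expZ_graeffe_num expZ_graeffe_den.
  rewrite !big_nat_recr //= prod_zpow_num_graeffe; last first.
    by move=> i /andP[i_gt0 i_lt_m]; apply: IH.
  rewrite -mulrBr zpow_num_graeffe_even //.
  move: odd_bm; rewrite dvdzE dvdn2 negbK => -> /eqmodXnP /(_ m (ltnSn m)).
  rewrite coef0 mulr1n mulr_natl mulrnAl mulrnAr coefMn mulrCA coefXnM ltnn subnn.
  rewrite -horner_coef0 hornerM horner_prod big_nat_cond big1; last first.
    by move=> i /andP[/andP[i_gt0 _] _]; case: (zpow_num_graeffe_horner0 (b i) i_gt0).
  by rewrite horner_exp (zpow_num_graeffe_horner0 0 m_gt0).2 expr1n mulr1.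
apply: eqmodXn_eq => N; have := defect N.
rewrite expZ_graeffe_num expZ_graeffe_den prod_zpow_num_graeffe; last first.
  by move=> i /andP[i_gt0 _]; apply: b_even.
rewrite subrr mulrC -(mulr0 (K N)) => /(eqmodXn_lcancel (K0 N)).
by case=> q e; exists q; rewrite -e subr0.
Qed.

End GraeffeZ4.

Section ExpZStep.
Variable R : comNzRingType.

Lemma expZ_factor_exp n k : (0 < n)%N ->
  exists2 r, expZ_factor n ^+ k = 1 + 'X^n * r :> {poly R} & r`_0 = (-1) ^+ n * k%:R.
Proof.
move=> n_gt0; have fE : expZ_factor n = 1 + 'X^n * ((-1) ^+ n)%:P :> {poly R}.
  by rewrite /expZ_factor [(- 'X) ^+ n]exprNn mulrC polyC_exp polyCN.
elim: k => [|k [r fk r0]]; first by exists 0; rewrite ?expr0 ?mulr0 ?addr0 ?coef0.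
exists (r + ((-1) ^+ n)%:P + 'X^n * (r * ((-1) ^+ n)%:P)).
  by rewrite exprSr fk fE; ring.
by rewrite !coefD coefC coefXnM n_gt0 /= r0 addr0 -addn1 natrD; ring.
Qed.

Lemma expZ_step_coef n (A B : {poly R}) k : (0 < n)%N -> eqmodXn n A B ->
  (A * expZ_factor n ^+ pos_part k - B * expZ_factor n ^+ neg_part k)`_n
    = (A - B)`_n + (-1) ^+ n * k%:~R * B`_0.
Proof.
move=> n_gt0 /eqmodXnP AB.
have [rp -> rp0] := expZ_factor_exp (pos_part k) n_gt0.
have [rn -> rn0] := expZ_factor_exp (neg_part k) n_gt0.
have -> : A * (1 + 'X^n * rp) - B * (1 + 'X^n * rn)
    = A - B + 'X^n * (A * rp - B * rn) by ring.
rewrite coefD coefXnM ltnn subnn !coefB !coef0M rp0 rn0 (AB 0 n_gt0).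
by rewrite -[k in RHS](pos_neg_part k) rmorphB /= !pmulrn; ring.
Qed.

Lemma eqmodXn_expZ_factor n k : eqmodXn n (expZ_factor n ^+ k) (1 : {poly R}).
Proof.
case: n => [|n]; first by exists (expZ_factor 0 ^+ k - 1); rewrite expr0 mul1r.
by have [r -> _] := expZ_factor_exp k (ltn0Sn n); exists r; rewrite addrC addKr.
Qed.

End ExpZStep.

Lemma eq_expZ (R : comNzRingType) (b c : nat -> int) N :
  (forall i, (0 < i <= N)%N -> b i = c i) ->
  expZ_num b N = expZ_num c N :> {poly R} /\ expZ_den b N = expZ_den c N :> {poly R}.
Proof. by move=> bc; split; apply: eq_big_nat => i /bc ->. Qed.

Lemma is_logZP (P : {poly int}) b :
  is_logZ P b <-> forall N, eqmodXn N.+1 (expZ_num b N) (P * expZ_den b N).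
Proof.
split=> [Pb N | Pb N j jN]; first by apply/eqmodXnP => j; rewrite ltnS; exact: Pb.
exact: (eqmodXnP _ _ _).1 (Pb N) j jN.
Qed.

Section LogZ.
Variable P : {poly int}.

(* Raising the factor 1 + (-X)^n to this exponent cancels the coefficient of
   X^n in A - B (see expZ_step_coef). *)
Definition logZ_next n (A B : {poly int}) : int := - ((-1) ^+ n * (A - B)`_n).

Fixpoint logZ_approx N : nat -> int :=
  if N is M.+1 then
    let c := logZ_approx M in
    fun i => if i == N then logZ_next N (expZ_num c M) (P * expZ_den c M) else c i
  else fun _ => 0.

Definition logZ i := logZ_approx i i.

Lemma logZ_approx_stable N M i : (i <= N <= M)%N -> logZ_approx M i = logZ_approx N i.
Proof.
move=> /andP[iN]; elim: M => [|M IH]; first by rewrite leqn0 => /eqP ->.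
rewrite leq_eqVlt => /orP[/eqP -> //|NM]; rewrite /= ifN ?IH //.
by apply/eqP => iM; lia.
Qed.

Hypothesis P0 : P`_0 = 1.

Lemma logZ_approx_spec N :
  eqmodXn N.+1 (expZ_num (logZ_approx N) N) (P * expZ_den (logZ_approx N) N).
Proof.
elim: N => [|N IH].
  apply/eqmodXnP => j; rewrite ltnS leqn0 => /eqP ->.
  by rewrite /expZ_num /expZ_den !big_geq // mulr1 P0 coef1.
set c := logZ_approx N; set c' := logZ_approx N.+1.
have c'c i : (0 < i <= N)%N -> c' i = c i.
  by move=> /andP[_ iN]; rewrite /c' /= ifN //; apply/eqP => iN1; lia.
have c'N1 : c' N.+1 = logZ_next N.+1 (expZ_num c N) (P * expZ_den c N).
  by rewrite /c' /= eqxx.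
rewrite /expZ_num /expZ_den !(big_nat_recr N.+1) //= -/(expZ_num c' N) -/(expZ_den c' N).
have [-> ->] := @eq_expZ int _ _ _ c'c.
rewrite c'N1 mulrA; set A := expZ_num c N; set B := P * expZ_den c N.
have B0 : B`_0 = 1 by rewrite coef0M P0 mul1r -horner_coef0 expZ_den_horner0.
apply: eqmodXnS.
  apply: (@eqmodXn_trans _ _ _ (B * 1)).
    exact: eqmodXnM IH (eqmodXn_expZ_factor _ _ _).
  exact: eqmodXnM (eqmodXn_refl _ _) (eqmodXn_sym (eqmodXn_expZ_factor _ _ _)).
apply/eqP; rewrite -subr_eq0 -coefB expZ_step_coef // B0 /logZ_next intz mulr1.
by apply/eqP; rewrite -signr_odd; case: odd; rewrite ?expr1 ?expr0; ring.
Qed.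

Lemma logZ_spec : is_logZ P logZ.
Proof.
apply/is_logZP => N.
have approxE i : (0 < i <= N)%N -> logZ i = logZ_approx N i.
  by move=> /andP[_ iN]; rewrite /logZ (@logZ_approx_stable i N) ?leqnn.
by have [-> ->] := @eq_expZ int _ _ _ approxE; apply: logZ_approx_spec.
Qed.

End LogZ.

Section IntReduction.
Variable R : comNzRingType.
Local Notation red := (map_poly (fun z : int => z%:~R : R)).

Lemma red_expZ_factor i : red (expZ_factor i) = expZ_factor i.
Proof. by rewrite rmorphD rmorph1 rmorphXn rmorphN /= map_polyX. Qed.

Lemma red_expZ_num b N : red (expZ_num b N) = expZ_num b N.
Proof.
rewrite rmorph_prod; apply: eq_bigr => i _; rewrite rmorphXn.
by congr (_ ^+ _); exact: red_expZ_factor.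
Qed.

Lemma red_expZ_den b N : red (expZ_den b N) = expZ_den b N.
Proof.
rewrite rmorph_prod; apply: eq_bigr => i _; rewrite rmorphXn.
by congr (_ ^+ _); exact: red_expZ_factor.
Qed.

Lemma red_is_logZ P b : is_logZ P b ->
  forall N, eqmodXn N.+1 (expZ_num b N) (red P * expZ_den b N).
Proof.
move=> /is_logZP Pb N; rewrite -red_expZ_num -red_expZ_den -rmorphM.
exact: eqmodXn_map (Pb N).
Qed.

Lemma red_conway_triple C : red (conway_triple C)
  = red (even_part C) * (red (even_part C) \Po 'X^2) * (red (even_part C) \Po - 'X).
Proof. by rewrite !rmorphM /= !map_comp_poly rmorphXn rmorphN /= map_polyX. Qed.

End IntReduction.

Lemma even_part_coef0 (C : {poly int}) : C`_0 = 1 -> (even_part C)`_0 = 1.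
Proof.
move=> C0; rewrite coef_poly muln0; case: ifP => // /negbT.
by rewrite -leqNgt => /(nth_default 0); rewrite C0.
Qed.

Lemma sqr_conway_triple_iff_logZ_even (C : {poly int}) b :
  C`_0 = 1 -> is_logZ (even_part C) b ->
  (exists F, F ^+ 2 = map_poly (fun z : int => z%:~R : 'Z_4) (conway_triple C))
    <-> forall m, (0 < m)%N -> ~~ odd m -> (2 %| b m)%Z.
Proof.
move=> C0 Pb; rewrite red_conway_triple sqr_triple_iff; last first.
  by rewrite coef_map /= even_part_coef0.
exact: graeffe_fixed_iff_expZ_even (red_is_logZ _ Pb).
Qed.

Theorem mainTheorem5 :
  (forall (n : nat) (w : seq int) (C : {poly int}),
      is_knot n w -> amphicheiral n w -> conway n w C ->
      exists F : {poly 'Z_4},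
        F ^+ 2 = map_poly (fun z : int => z%:~R : 'Z_4) (conway_triple C))
  <->
  (forall (n : nat) (w : seq int) (C : {poly int}) (b : nat -> int),
      is_knot n w -> amphicheiral n w -> conway n w C ->
      is_logZ (even_part C) b ->
      forall i : nat, (0 < i)%N -> (2 %| b (2 * i)%N)%Z).
Proof.
split=> [square n w C b knot amph conwayC Pb i i_gt0 | logZ_even n w C knot amph conwayC].
  have := square n w C knot amph conwayC.
  rewrite (sqr_conway_triple_iff_logZ_even conwayC.1 Pb).
  by apply; rewrite ?muln_gt0 ?oddM.
have Pb := logZ_spec (even_part_coef0 conwayC.1).
apply/(sqr_conway_triple_iff_logZ_even conwayC.1 Pb) => m m_gt0 even_m.
have := logZ_even n w C _ knot amph conwayC Pb m./2.
by rewrite mul2n even_halfK // half_gt0; apply; move: m_gt0 even_m; case: m => [|[]].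
Qed.
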